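(* Let $Z\in\mathbb{R}^{m\times n}$ and $\lambda\ge 0$, and let $\breve{k}$ be the number of singular values of $Z$ that are strictly larger than $\lambda$. Let $k\ge \breve{k}$ and let $Q\in\mathbb{R}^{m\times k}$ have orthonormal columns ($Q^\top Q=I$) such that the column span of $Q$ contains the subspace spanned by the top $\breve{k}$ left singular vectors of $Z$ (those associated with the singular values larger than $\lambda$). Then $\mathrm{SVT}_\lambda(Z)=Q\,\mathrm{SVT}_\lambda(Q^\top Z)$.
   Context: For a matrix $A$ with singular value decomposition $A=U\Sigma V^\top$ and $\lambda\ge 0$, the singular value thresholding operator is $\mathrm{SVT}_\lambda(A)=U(\Sigma-\lambda I)_+V^\top$, where $(\cdot)_+$ takes the entrywise maximum with $0$; equivalently $\mathrm{SVT}_\lambda(A)=\arg\min_X \frac12\|X-A\|_F^2+\lambda\|X\|_*$, with $\|\cdot\|_*$ the nuclear norm (sum of singular values). *)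

From mathcomp Require Import all_boot all_order all_algebra.
Set Implicit Arguments. Unset Strict Implicit. Unset Printing Implicit Defensive.
Import Order.TTheory GRing.Theory Num.Theory.
Local Open Scope ring_scope.

Definition is_svd (R : rcfType) (m n r : nat) (A : 'M[R]_(m, n))
    (U : 'M[R]_(m, r)) (s : 'rV[R]_r) (V : 'M[R]_(n, r)) : Prop :=
  [/\ U^T *m U = 1%:M, V^T *m V = 1%:M, (forall i, 0 <= s 0 i)
    & A = U *m diag_mx s *m V^T].

Definition svt_of (R : rcfType) (m n r : nat) (lam : R)
    (U : 'M[R]_(m, r)) (s : 'rV[R]_r) (V : 'M[R]_(n, r)) : 'M[R]_(m, n) :=
  U *m diag_mx (\row_i Num.max (s 0 i - lam) 0) *m V^T.

From mathcomp Require Import all_boot all_order all_algebra.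
Set Implicit Arguments. Unset Strict Implicit. Unset Printing Implicit Defensive.
Import Order.TTheory GRing.Theory Num.Theory.
Local Open Scope ring_scope.

(* For any SVD A = U S V^T one has SVT_lam(A) = A V h(S) V^T with
   h(x) = (x - lam)_+ / x, and V h(S) V^T depends only on the eigenvectors of
   A^T A with eigenvalues above lam^2.  For A = Q^T Z, since Q Q^T fixes the top
   left singular vectors of Z, the top right singular vectors of Z stay
   eigenvectors of A^T A = Z^T Q Q^T Z with the same eigenvalues, while by
   Bessel's inequality its Rayleigh quotient on their orthogonal complement is
   still at most lam^2.  Hence Q SVT_lam(Q^T Z) = Q Q^T Z V h(S) V^T, and Q Q^T
   fixes Z V h(S) V^T = U (S - lam)_+ V^T, whose columns lie in the top left
   singular space. *)

Section Quadratic.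
Variable R : realDomainType.

Lemma tr_mulmx_self_sum m (x : 'cV[R]_m) : (x^T *m x) 0 0 = \sum_i x i 0 ^+ 2.
Proof. by rewrite mxE; apply: eq_bigr => i _; rewrite mxE expr2. Qed.

Lemma tr_mulmx_self_ge0 m (x : 'cV[R]_m) : 0 <= (x^T *m x) 0 0.
Proof. by rewrite tr_mulmx_self_sum sumr_ge0 // => i _; apply: sqr_ge0. Qed.

Lemma tr_mulmx_self_eq0 m (x : 'cV[R]_m) : (x^T *m x) 0 0 = 0 -> x = 0.
Proof.
rewrite tr_mulmx_self_sum => /psumr_eq0P x0; apply/matrixP => i j.
rewrite (ord1 j) mxE; apply/eqP; rewrite -sqrf_eq0 x0 //.
by move=> k _; apply: sqr_ge0.
Qed.

Lemma bessel_ineq m k (W : 'M[R]_(m, k)) (x : 'cV[R]_m) :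
  W^T *m W = 1%:M -> ((W^T *m x)^T *m (W^T *m x)) 0 0 <= (x^T *m x) 0 0.
Proof.
move=> WW; pose y := x - W *m (W^T *m x).
have -> : x^T *m x = (W^T *m x)^T *m (W^T *m x) + y^T *m y.
  rewrite /y [(_ - _)^T]raddfB /= !trmx_mul trmxK mulmxBl !mulmxBr !mulmxA.
  rewrite -[_ *m W^T *m W]mulmxA WW mulmx1.
  by rewrite subrr subr0 addrC subrK.
by rewrite [X in _ <= X]mxE lerDl tr_mulmx_self_ge0.
Qed.

Lemma diag_quad_le p (d : 'rV[R]_p) (y : 'cV[R]_p) (c : R) :
  (forall i, y i 0 != 0 -> d 0 i ^+ 2 <= c) ->
  ((diag_mx d *m y)^T *m (diag_mx d *m y)) 0 0 <= c * (y^T *m y) 0 0.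
Proof.
move=> dc; rewrite !tr_mulmx_self_sum mulr_sumr; apply: ler_sum => i _.
rewrite mul_diag_mx mxE exprMn.
have [->|yi0] := eqVneq (y i 0) 0; first by rewrite expr0n !mulr0.
by rewrite ler_wpM2r ?sqr_ge0 ?dc.
Qed.

Lemma quad_eq0_of_gt m (x : 'cV[R]_m) (mu c : R) :
  c < mu -> mu * (x^T *m x) 0 0 <= c * (x^T *m x) 0 0 -> x = 0.
Proof.
move=> c_lt_mu muc; apply: tr_mulmx_self_eq0; apply/le_anti.
rewrite tr_mulmx_self_ge0 andbT -(pmulr_rle0 _ (_ : 0 < mu - c)) ?subr_gt0 //.
by rewrite mulrBl subr_le0.
Qed.

End Quadratic.

Lemma diag_sqr_intertwine (R : realDomainType) p q (a : 'rV[R]_p) (b : 'rV[R]_q)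
    (N : 'M[R]_(p, q)) (f : R -> R) :
  (forall i, 0 <= a 0 i) -> (forall j, 0 <= b 0 j) ->
  diag_mx a *m diag_mx a *m N = N *m (diag_mx b *m diag_mx b) ->
  diag_mx (\row_i f (a 0 i)) *m N = N *m diag_mx (\row_j f (b 0 j)).
Proof.
move=> a_ge0 b_ge0 /matrixP abN; apply/matrixP => i j.
have := abN i j; rewrite !mulmx_diag !mul_diag_mx !mul_mx_diag !mxE => abNij.
have [->|Nij] := eqVneq (N i j) 0; first by rewrite mulr0 mul0r.
suff -> : a 0 i = b 0 j by rewrite mulrC.
apply/eqP; rewrite -(eqrXn2 (n := 2)) // !expr2; apply/eqP.
by apply: (mulIf Nij); rewrite abNij mulrC.
Qed.

Definition top_mask (R : numDomainType) p (lam : R) (s : 'rV[R]_p) : 'M[R]_p :=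
  diag_mx (\row_i (if lam < s 0 i then 1 else 0)).

Definition shrink (R : numFieldType) (lam x : R) : R :=
  if lam < x then (x - lam) / x else 0.

Definition shrink_op (R : numFieldType) n p (lam : R) (V : 'M[R]_(n, p))
    (s : 'rV[R]_p) : 'M[R]_n :=
  V *m diag_mx (\row_i shrink lam (s 0 i)) *m V^T.

Section Shrink.
Variables (R : realFieldType) (p : nat) (lam : R) (s : 'rV[R]_p).
Hypothesis lam_ge0 : 0 <= lam.

Local Notation D := (top_mask lam s).
Local Notation H := (diag_mx (\row_i shrink lam (s 0 i))).

Lemma top_mask_idem : D *m D = D.
Proof.
rewrite mulmx_diag; congr diag_mx; apply/rowP => i; rewrite !mxE.
by case: ifP; rewrite ?mulr1 ?mulr0.
Qed.

Lemma top_mask_shrink : D *m H = H.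
Proof.
rewrite mulmx_diag; congr diag_mx; apply/rowP => i; rewrite !mxE /shrink.
by case: ifP; rewrite ?mul1r ?mul0r.
Qed.

Lemma shrink_top_mask : H *m D = H.
Proof. by rewrite diag_mxC top_mask_shrink. Qed.

Lemma diag_mul_shrink : diag_mx s *m H = diag_mx (\row_i Num.max (s 0 i - lam) 0).
Proof.
rewrite mulmx_diag; congr diag_mx; apply/rowP => i; rewrite !mxE /shrink.
case: ltP => [lam_lt|s_le]; last first.
  by rewrite mulr0; apply/esym/max_idPr; rewrite subr_le0.
have s_gt0 : 0 < s 0 i by apply: le_lt_trans lam_lt.
rewrite mulrCA divff ?gt_eqF // mulr1.
by apply/esym/max_idPl; rewrite subr_ge0 ltW.
Qed.

Lemma top_mask_factor : D = diag_mx s *m diag_mx s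
  *m diag_mx (\row_i (if lam < s 0 i then (s 0 i ^+ 2)^-1 else 0)).
Proof.
rewrite !mulmx_diag; congr diag_mx; apply/rowP => i; rewrite !mxE.
case: ifP => [lam_lt|]; last by rewrite mulr0.
have s_gt0 : 0 < s 0 i by apply: le_lt_trans lam_lt.
by rewrite -expr2 divff // expf_neq0 // gt_eqF.
Qed.

End Shrink.

Lemma col_mul (R : pzRingType) m n p (A : 'M[R]_(m, n)) (B : 'M[R]_(n, p)) j :
  col j (A *m B) = A *m col j B.
Proof. by rewrite !colE mulmxA. Qed.

(* [G] plays the role of A^T A for A = Q^T Z: it is diagonalised by the right
   singular vectors [V'] of A, while the right singular vectors [V] of Z only
   provide its eigenvectors above [lam^2]. *)
Section ShrinkOpUnique.
Variables (R : realFieldType) (n r r' : nat) (lam : R) (G : 'M[R]_n).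
Variables (V : 'M[R]_(n, r)) (s : 'rV[R]_r) (V' : 'M[R]_(n, r')) (s' : 'rV[R]_r').
Hypotheses (lam_ge0 : 0 <= lam) (VV : V^T *m V = 1%:M) (V'V' : V'^T *m V' = 1%:M).
Hypotheses (s_ge0 : forall i, 0 <= s 0 i) (s'_ge0 : forall j, 0 <= s' 0 j).
Hypothesis G_eig : G = V' *m (diag_mx s' *m diag_mx s') *m V'^T.
Hypothesis G_top :
  G *m V *m top_mask lam s = V *m top_mask lam s *m (diag_mx s *m diag_mx s).
Hypothesis G_quad_le : forall x : 'cV_n, top_mask lam s *m V^T *m x = 0 ->
  (x^T *m G *m x) 0 0 <= lam ^+ 2 * (x^T *m x) 0 0.

Local Notation D := (top_mask lam s).
Local Notation D' := (top_mask lam s').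

Let G_V' : G *m V' = V' *m (diag_mx s' *m diag_mx s').
Proof. by rewrite G_eig -mulmxA V'V' mulmx1. Qed.

Let trmx_sqr p (d : 'rV[R]_p) : (diag_mx d *m diag_mx d)^T = diag_mx d *m diag_mx d.
Proof. by rewrite trmx_mul tr_diag_mx. Qed.

Lemma col_eigvec_in_top j : lam < s' 0 j -> V *m D *m V^T *m col j V' = col j V'.
Proof.
move=> lam_lt; set y := col j V'; set x := y - V *m D *m V^T *m y.
have Dx : D *m V^T *m x = 0.
  by rewrite mulmxBr !mulmxA -[D *m V^T *m V]mulmxA VV mulmx1 top_mask_idem subrr.
have xVD : x^T *m V *m D = 0.
  by apply: trmx_inj; rewrite !trmx_mul trmxK tr_diag_mx trmx0 mulmxA.
have xPy : x^T *m (V *m D *m V^T *m y) = 0 by rewrite !mulmxA xVD !mul0mx.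
have Gy : G *m y = s' 0 j ^+ 2 *: y.
  apply/matrixP => a b.
  by rewrite (ord1 b) -col_mul G_V' mulmx_diag mul_mx_diag !mxE mulrC expr2.
have xGPy : x^T *m G *m (V *m D *m V^T *m y) = 0.
  have -> : x^T *m G *m (V *m D *m V^T *m y) = x^T *m (G *m V *m D) *m (V^T *m y).
    by rewrite !mulmxA.
  by rewrite G_top !mulmxA xVD !mul0mx.
have xGx : x^T *m G *m x = s' 0 j ^+ 2 *: (x^T *m x).
  rewrite {2}/x mulmxBr xGPy subr0 -mulmxA Gy -scalemxAr.
  by rewrite {2}/x mulmxBr xPy subr0.
have x0 : x = 0.
  apply: (@quad_eq0_of_gt _ _ _ (s' 0 j ^+ 2) (lam ^+ 2)).
    by rewrite ltr_pXn2r // nnegrE.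
  by have := G_quad_le Dx; rewrite xGx mxE.
by apply/esym/eqP; rewrite -subr_eq0 -/x x0.
Qed.

Lemma top_eigvecs_in_top : V *m D *m V^T *m V' *m D' = V' *m D'.
Proof.
apply/matrixP => a j; have := @col_eigvec_in_top j.
set P := V *m D *m V^T; rewrite -col_mul !mul_mx_diag !mxE.
case: ifP => [lam_lt /(_ isT)/matrixP/(_ a 0)|]; last by rewrite !mulr0.
by rewrite !mxE => ->.
Qed.

Lemma top_in_eigspan : D *m V^T *m (V' *m V'^T) = D *m V^T.
Proof.
pose K := diag_mx (\row_i (if lam < s 0 i then (s 0 i ^+ 2)^-1 else 0)).
have VD : V *m D = G *m V *m D *m K.
  by rewrite G_top -mulmxA -top_mask_factor // -mulmxA top_mask_idem.
have PG : V' *m V'^T *m G = G.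
  by rewrite G_eig !mulmxA -[V' *m V'^T *m V']mulmxA V'V' mulmx1.
apply: trmx_inj; rewrite !trmx_mul !trmxK [D^T]tr_diag_mx !mulmxA.
by rewrite -(mulmxA _ V) VD !mulmxA PG.
Qed.

Lemma top_intertwine :
  diag_mx (\row_i shrink lam (s 0 i)) *m (D *m V^T *m V')
  = D *m V^T *m V' *m diag_mx (\row_j shrink lam (s' 0 j)).
Proof.
apply: diag_sqr_intertwine => //.
have GT : G^T = G by rewrite G_eig trmx_mul trmxK trmx_mul trmx_sqr mulmxA.
have := congr1 (fun M => M^T *m V') G_top.
by rewrite /= !trmx_mul GT !tr_diag_mx -!mulmxA G_V' => ->.
Qed.

Lemma shrink_op_unique : shrink_op lam V' s' = shrink_op lam V s.
Proof.
set H := diag_mx (\row_i shrink lam (s 0 i)).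
set H' := diag_mx (\row_i shrink lam (s' 0 i)).
have -> : shrink_op lam V' s' = V *m (D *m V^T *m V' *m H') *m V'^T.
  rewrite /shrink_op -(top_mask_shrink lam s') mulmxA -top_eigvecs_in_top.
  by rewrite -(mulmxA _ D') top_mask_shrink !mulmxA.
rewrite -top_intertwine.
have -> : V *m (H *m (D *m V^T *m V')) *m V'^T = V *m H *m (D *m V^T *m (V' *m V'^T)).
  by rewrite !mulmxA.
by rewrite top_in_eigspan mulmxA -(mulmxA V) shrink_top_mask.
Qed.

End ShrinkOpUnique.

Lemma proj_submx (R : fieldType) m k (Q : 'M[R]_(m, k)) (x : 'cV[R]_m) :
  Q^T *m Q = 1%:M -> (x^T <= Q^T)%MS -> Q *m Q^T *m x = x.
Proof.
move=> QQ /submxP[C xC]; have -> : x = Q *m C^T by rewrite -[x]trmxK xC trmx_mul trmxK.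
by rewrite -mulmxA [Q^T *m _]mulmxA QQ mul1mx.
Qed.

Lemma proj_top_mask (R : numFieldType) m k r (Q : 'M[R]_(m, k)) (U : 'M[R]_(m, r))
    (s : 'rV[R]_r) (lam : R) :
  Q^T *m Q = 1%:M -> (forall i, lam < s 0 i -> ((col i U)^T <= Q^T)%MS) ->
  Q *m Q^T *m U *m top_mask lam s = U *m top_mask lam s.
Proof.
move=> QQ top_sub; apply/matrixP => a i; set P := Q *m Q^T.
rewrite !mul_mx_diag !mxE; case: ifP => [lam_lt|]; last by rewrite !mulr0.
have /matrixP/(_ a 0) := proj_submx QQ (top_sub i lam_lt).
by rewrite -col_mul !mxE => ->.
Qed.

Section SVD.
Variables (R : rcfType) (m n r : nat) (A : 'M[R]_(m, n)).
Variables (U : 'M[R]_(m, r)) (s : 'rV[R]_r) (V : 'M[R]_(n, r)).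
Hypothesis svdA : is_svd A U s V.

Lemma svd_mulmxV : A *m V = U *m diag_mx s.
Proof. by case: svdA => _ VV _ ->; rewrite -mulmxA VV mulmx1. Qed.

Lemma svd_trmx_mulmxU : A^T *m U = V *m diag_mx s.
Proof.
case: svdA => UU _ _ ->.
by rewrite !trmx_mul trmxK tr_diag_mx -!mulmxA UU mulmx1.
Qed.

Lemma svd_gram : A^T *m A = V *m (diag_mx s *m diag_mx s) *m V^T.
Proof.
have [_ _ _ {2}->] := svdA.
by rewrite !mulmxA svd_trmx_mulmxU.
Qed.

Lemma svt_ofE lam : 0 <= lam -> svt_of lam U s V = A *m shrink_op lam V s.
Proof.
by move=> lam_ge0; rewrite /shrink_op !mulmxA svd_mulmxV -(mulmxA U) diag_mul_shrink.
Qed.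

End SVD.

Section ProjectedGram.
Variables (R : rcfType) (m n r k : nat) (lam : R) (Z : 'M[R]_(m, n)).
Variables (U : 'M[R]_(m, r)) (s : 'rV[R]_r) (V : 'M[R]_(n, r)) (Q : 'M[R]_(m, k)).
Hypotheses (svdZ : is_svd Z U s V) (QQ : Q^T *m Q = 1%:M).
Hypothesis QU : Q *m Q^T *m U *m top_mask lam s = U *m top_mask lam s.

Local Notation D := (top_mask lam s).

Lemma proj_gram_top :
  Z^T *m Q *m Q^T *m Z *m V *m D = V *m D *m (diag_mx s *m diag_mx s).
Proof.
rewrite -(mulmxA _ Z) (svd_mulmxV svdZ).
have -> : Z^T *m Q *m Q^T *m (U *m diag_mx s) *m D
    = Z^T *m (Q *m Q^T *m U *m D) *m diag_mx s by rewrite -!mulmxA diag_mxC.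
by rewrite QU mulmxA (svd_trmx_mulmxU svdZ) -(mulmxA V) diag_mxC !mulmxA.
Qed.

Lemma proj_gram_quad_le (x : 'cV[R]_n) : D *m V^T *m x = 0 ->
  (x^T *m (Z^T *m Q *m Q^T *m Z) *m x) 0 0 <= lam ^+ 2 * (x^T *m x) 0 0.
Proof.
have [UU VV s_ge0 ZE] := svdZ; move=> Dx.
have -> : x^T *m (Z^T *m Q *m Q^T *m Z) *m x
    = (Q^T *m (Z *m x))^T *m (Q^T *m (Z *m x)).
  by rewrite !trmx_mul trmxK !mulmxA.
apply: le_trans (bessel_ineq _ QQ) _.
have -> : (Z *m x)^T *m (Z *m x)
    = (diag_mx s *m (V^T *m x))^T *m (diag_mx s *m (V^T *m x)).
  by rewrite ZE -!mulmxA [(U *m _)^T]trmx_mul -mulmxA (mulmxA U^T) UU mul1mx.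
apply: le_trans (ler_wpM2l (sqr_ge0 lam) (bessel_ineq x VV)).
apply: diag_quad_le => i yi0; have s_le : s 0 i <= lam.
  rewrite leNgt; apply: contra yi0 => lam_lt.
  by move/matrixP/(_ i 0): Dx; rewrite -mulmxA mul_diag_mx !mxE lam_lt mul1r => ->.
by rewrite !expr2 ler_pM.
Qed.

Lemma proj_svt : Q *m Q^T *m (Z *m shrink_op lam V s) = Z *m shrink_op lam V s.
Proof.
set H := diag_mx (\row_i shrink lam (s 0 i)).
suff -> : Z *m shrink_op lam V s = U *m D *m (diag_mx s *m H *m V^T).
  by rewrite mulmxA (mulmxA _ U) QU.
rewrite /shrink_op -(top_mask_shrink lam s) !mulmxA (svd_mulmxV svdZ).
by rewrite -(mulmxA U) diag_mxC !mulmxA.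
Qed.

End ProjectedGram.

Theorem proposition4 (R : rcfType) (m n r k : nat) (Z : 'M[R]_(m, n)) (lam : R)
    (U : 'M[R]_(m, r)) (s : 'rV[R]_r) (V : 'M[R]_(n, r))
    (Q : 'M[R]_(m, k)) :
  0 <= lam ->
  is_svd Z U s V ->
  leq #|[set i : 'I_r | lam < s 0 i]| k ->
  Q^T *m Q = 1%:M ->
  (forall i : 'I_r, lam < s 0 i -> ((col i U)^T <= Q^T)%MS) ->
  forall (r' : nat) (U' : 'M[R]_(k, r')) (s' : 'rV[R]_r') (V' : 'M[R]_(n, r')),
    is_svd (Q^T *m Z) U' s' V' ->
    svt_of lam U s V = Q *m svt_of lam U' s' V'.
Proof.
move=> lam_ge0 svdZ _ QQ top_sub r' U' s' V' svdA.
have [_ VV s_ge0 _] := svdZ; have [_ V'V' s'_ge0 _] := svdA.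
have QU := proj_top_mask QQ top_sub.
have gramA : (Q^T *m Z)^T *m (Q^T *m Z) = Z^T *m Q *m Q^T *m Z.
  by rewrite trmx_mul trmxK !mulmxA.
rewrite (svt_ofE svdZ lam_ge0) (svt_ofE svdA lam_ge0).
rewrite (shrink_op_unique (G := Z^T *m Q *m Q^T *m Z) lam_ge0 VV V'V' s_ge0 s'_ge0).
- by rewrite -(proj_svt svdZ QU) !mulmxA.
- by rewrite -gramA (svd_gram svdA).
- exact: proj_gram_top svdZ QU.
- exact: proj_gram_quad_le svdZ QQ.
Qed.
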